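(* Let $A\in\mathbb{R}_+^{n\times n}$ be a nonzero circulant matrix. Then $$x\in\mathrm{Attr}(A)\iff A^{n^2}_{i\bullet}\otimes x=A^{n^2}_{j\bullet}\otimes x\ \text{ for all } i,j\in\{1,\dots,n\}\text{ with }[i]\to_1[j],$$ and $$x\in\mathrm{Attr}(A)\iff A^{n^2}_{i\bullet}\otimes x=A^{n^2}_{j\bullet}\otimes x\ \text{ for all } i,j\in\{1,\dots,n\}\text{ with } i\sim_A j.$$
   Context: Max algebra on $\mathbb{R}_+$: $\oplus=\max$, ordinary product; $A^t$ max-algebraic power, $A^t_{i\bullet}$ its $i$-th row, $A^t_{i\bullet}\otimes x=\max_k (A^t)_{i,k}x_k$. $\lambda(A)$: greatest max-algebraic eigenvalue (maximum cycle geometric mean of the weighted digraph $\mathcal{G}(A)$ with edges $(i,j)$, $A_{i,j}\ne0$). $\mathrm{Attr}(A)=\{x\in\mathbb{R}_+^n: A^{t+1}\otimes x=\lambda(A)A^t\otimes x\text{ for some }t\ge0\}$. The critical digraph $\mathcal{C}(A)$ consists of all nodes and edges of cycles attaining mean $\lambda(A)$; for a nonzero circulant every node is critical and $\mathcal{C}(A)$ is a disjoint union of strongly connected components. $i\sim_A j$ means $i,j$ lie in the same component of $\mathcal{C}(A)$. For a component with cyclicity $\sigma$ (gcd of its cycle lengths), nodes $i,j$ of it are in the same cyclic class if walks in the component from $i$ to $j$ have length divisible by $\sigma$; $[i]$ is the cyclic class of $i$, and $[i]\to_1[j]$ means walks from a member of $[i]$ to a member of $[j]$ (in the same component) have length $\equiv1\pmod\sigma$.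 A circulant matrix has $A_{i,j}=a_t$, $t\equiv j-i\pmod n$. *)

From HB Require Import structures.
From mathcomp Require Import all_boot all_order all_algebra.
Set Implicit Arguments. Unset Strict Implicit. Unset Printing Implicit Defensive.
Import Order.TTheory GRing.Theory Num.Theory.
Local Open Scope ring_scope.

Section MaxAlg.
Variables (R : rcfType) (n : nat).
Implicit Types (A B : 'M[R]_n) (x : 'I_n -> R) (l : R).

Definition nonneg_mx A : Prop := forall i j, 0 <= A i j.

Definition circulant A : Prop :=
  exists a : nat -> R, forall i j : 'I_n, A i j = a ((j + n - i) %% n)%N.

Definition mmul A B : 'M[R]_n :=
  \matrix_(i, j) \big[Num.max/0]_(k < n) (A i k * B k j).
Definition mpow A (t : nat) : 'M[R]_n := iter t (mmul A) 1%:M.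

Definition mrow A (i : 'I_n) x : R := \big[Num.max/0]_(k < n) (A i k * x k).

(* walks in G(A): i :: p, consecutive nodes joined by edges (A u v <> 0);
   the length of the walk is size p *)
Definition walk A (i : 'I_n) (p : seq 'I_n) : bool := path (fun u v => A u v != 0) i p.
Fixpoint walkw A (i : 'I_n) (p : seq 'I_n) : R :=
  if p is j :: q then A i j * walkw A j q else 1.

Definition cwalk A (i : 'I_n) (p : seq 'I_n) : Prop :=
  [/\ walk A i p, p != [::] & last i p = i].

(* l is the maximum cycle geometric mean of G(A):
   the geometric mean of a cycle of length k and weight w is w^(1/k), and
   w^(1/k) <= l  <->  w <= l^k  for l >= 0. *)
Definition is_lambda A l : Prop :=
  [/\ 0 <= l,
      (forall i p, cwalk A i p -> walkw A i p <= l ^+ size p) &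
      exists i p, cwalk A i p /\ walkw A i p = l ^+ size p].

Definition crit_cycle A l (i : 'I_n) (p : seq 'I_n) : Prop :=
  cwalk A i p /\ walkw A i p = l ^+ size p.
Definition crit_node A l (u : 'I_n) : Prop :=
  exists i p, crit_cycle A l i p /\ u \in i :: p.
Definition crit_edge A l (u v : 'I_n) : Prop :=
  exists i p, crit_cycle A l i p /\ exists p1 p2, i :: p = p1 ++ [:: u, v & p2].

Fixpoint cwalk_in A l (u : 'I_n) (p : seq 'I_n) : Prop :=
  if p is w :: q then crit_edge A l u w /\ cwalk_in A l w q else True.
Definition crit_walk A l (u v : 'I_n) (p : seq 'I_n) : Prop :=
  cwalk_in A l u p /\ last u p = v.

Definition simA A l (i j : 'I_n) : Prop :=
  [/\ crit_node A l i, crit_node A l j,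
      (exists p, crit_walk A l i j p) & (exists p, crit_walk A l j i p)].

Definition cyc_div A l (i : 'I_n) (d : nat) : Prop :=
  forall u p, simA A l i u -> crit_walk A l u u p -> p != [::] -> (d %| size p)%N.
Definition is_cyclicity A l (i : 'I_n) (s : nat) : Prop :=
  cyc_div A l i s /\ forall d, cyc_div A l i d -> (d %| s)%N.

Definition to1 A l (i j : 'I_n) : Prop :=
  simA A l i j /\
  forall s, is_cyclicity A l i s ->
    forall p, crit_walk A l i j p -> size p = 1 %[mod s].

(* attraction set (x is assumed in R_+^n separately) *)
Definition in_attr A l x : Prop :=
  exists t, forall i, mrow (mpow A t.+1) i x = l * mrow (mpow A t) i x.

End MaxAlg.

From HB Require Import structures.
From mathcomp Require Import all_boot all_order all_algebra.
From mathcomp Require Import zify ring lra.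
Import Order.TTheory GRing.Theory Num.Theory.
Local Open Scope ring_scope.
Set Implicit Arguments. Unset Strict Implicit. Unset Printing Implicit Defensive.

(* Write A i j = a ((j - i) mod n) and let M = max_t a t, attained at t. Every
   entry of A is at most M and the shift cycle i -> i + t -> i + 2t -> ... has
   weight M^n, so lambda(A) = M and the critical edges are exactly the shifts
   u -> u + s with a s = M. The key identity is
     (A^(k+1))_(i,j) = M (A^k)_(i+t,j)   for k + 1 >= n:
   in a walk of length k + 1 >= n some nonempty block of steps has the same
   displacement mod n as equally many steps t; trading the block for these
   steps does not decrease the weight, and one step t can be moved to the
   front. Hence A^(k+1) (x) x is M times A^k (x) x shifted by t, so x is in
   Attr(A) iff A^(n^2) (x) x is invariant under the maximal shifts, i.e.
   constant along critical walks; and both relations of the statement relate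
   i to i + t. *)

Lemma mulr_bigmax (R : realFieldType) (I : Type) (r : seq I) (P : pred I)
    (F : I -> R) c :
  0 <= c -> c * \big[Num.max/0]_(i <- r | P i) F i =
            \big[Num.max/0]_(i <- r | P i) (c * F i).
Proof. by move=> c_ge0; rewrite (big_endo _ (fun y z => maxr_pMr y z c_ge0)) ?mulr0. Qed.

Lemma pmulr_eq_bounds (R : realFieldType) (x y z w : R) :
  0 <= x -> x <= y -> 0 <= z -> z <= w -> 0 < y -> 0 < w ->
  x * z = y * w -> x = y /\ z = w.
Proof. by move=> *; split; nra. Qed.

Lemma pigeonhole_lt (T : finType) m (f : 'I_m -> T) : (#|T| < m)%N ->
  exists p q : 'I_m, (p < q)%N /\ f p = f q.
Proof.
move=> card_lt.
have [[p q] /andP[pq /eqP fpq]|no_pair] :=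
  pickP [pred pq : 'I_m * 'I_m | (pq.1 < pq.2)%N && (f pq.1 == f pq.2)].
  by exists p, q.
suff /leq_card : injective f by rewrite card_ord leqNgt card_lt.
move=> p q fpq; apply/val_inj/eqP; case: ltngtP => // [pq|qp].
- by move: (no_pair (p, q)); rewrite /= pq fpq eqxx.
- by move: (no_pair (q, p)); rewrite /= qp fpq eqxx.
Qed.

Lemma mx_neq0_gt0 (V : nmodType) m (B : 'M[V]_m) : B != 0 -> (0 < m)%N.
Proof. by case: m B => // B; rewrite flatmx0 eqxx. Qed.

Lemma crit_walk_cat (R : rcfType) n (A : 'M[R]_n) l u v w p q :
  crit_walk A l u v p -> crit_walk A l v w q -> crit_walk A l u w (p ++ q).
Proof.
move=> [walk_p <-] [walk_q <-]; split; last by rewrite last_cat.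
elim: p u walk_p walk_q => [|y p IH] u //= [e_uy walk_p] walk_q.
by split; last exact: IH.
Qed.

Section MaxPowers.
Variables (R : rcfType) (n : nat) (A : 'M[R]_n).
Hypothesis A_ge0 : nonneg_mx A.

Lemma mpowS k : mpow A k.+1 = mmul A (mpow A k).
Proof. by []. Qed.

Lemma mpow_ge0 k i j : 0 <= mpow A k i j.
Proof. by case: k => [|k]; rewrite /mpow /= mxE ?ler0n ?bigmax_ge_id. Qed.

Lemma mrow_mpowS k i x : (forall c, 0 <= x c) ->
  mrow (mpow A k.+1) i x = mrow A i (fun m => mrow (mpow A k) m x).
Proof.
move=> x_ge0; apply/le_anti/andP; split.
  apply: bigmax_le => [|c _]; first exact: bigmax_ge_id.
  rewrite mpowS /mmul mxE mulrC mulr_bigmax //.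
  apply: bigmax_le => [|m _]; first exact: bigmax_ge_id.
  apply: le_trans (le_bigmax _ (fun m => A i m * mrow (mpow A k) m x) m).
  rewrite mulrCA ler_wpM2l // mulrC.
  exact: le_bigmax _ (fun c => mpow A k m c * x c) c.
apply: bigmax_le => [|m _]; first exact: bigmax_ge_id.
rewrite /mrow mulr_bigmax //; apply: bigmax_le => [|c _]; first exact: bigmax_ge_id.
apply: le_trans (le_bigmax _ (fun c => mpow A k.+1 i c * x c) c).
rewrite mpowS /mmul mxE mulrA ler_wpM2r //.
exact: le_bigmax _ (fun m => A i m * mpow A k m c) m.
Qed.

Lemma mrow_eigen_from l x t0 : (forall c, 0 <= x c) -> 0 <= l ->
  (forall i, mrow (mpow A t0.+1) i x = l * mrow (mpow A t0) i x) ->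
  forall k i, (t0 <= k)%N -> mrow (mpow A k.+1) i x = l * mrow (mpow A k) i x.
Proof.
move=> x_ge0 l_ge0 eigen_t0 k i /subnK <-.
elim: (k - t0)%N i => [|m IH] i; first exact: eigen_t0.
rewrite addSn mrow_mpowS // {1}/mrow; under eq_bigr => c _ do rewrite IH.
rewrite mrow_mpowS // /mrow mulr_bigmax //.
by apply: eq_bigr => c _; rewrite mulrCA.
Qed.

End MaxPowers.

Section Circulant.
Variables (R : rcfType) (n : nat) (A : 'M[R]_n) (a : nat -> R).
Hypothesis A_circ : forall i j : 'I_n, A i j = a ((j + n - i) %% n)%N.
Hypothesis A_ge0 : nonneg_mx A.
Hypothesis n_gt0 : (0 < n)%N.

Definition amax : R := \big[Num.max/0]_(t < n) a t.
Definition shift (s : nat) (i : 'I_n) : 'I_n := Ordinal (ltn_pmod (i + s) n_gt0).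
(* A walk is encoded by its start and its list of steps (displacements mod n). *)
Definition steps_weight (s : seq nat) : R := \prod_(u <- s) a (u %% n).

Lemma A_shift s i : A i (shift s i) = a (s %% n).
Proof.
rewrite A_circ /=; congr a; apply/eqP; rewrite -(eqn_modDr i) subnK.
  by rewrite modnDr modn_mod addnC.
exact: leq_trans (ltnW (ltn_ord i)) (leq_addl _ _).
Qed.

Lemma a_ge0 s : 0 <= a (s %% n).
Proof. by rewrite -(A_shift s (Ordinal n_gt0)); apply: A_ge0. Qed.

Lemma a_le_amax s : a (s %% n) <= amax.
Proof. exact: le_bigmax _ (fun t : 'I_n => a t) (Ordinal (ltn_pmod s n_gt0)). Qed.

Lemma amax_ge0 : 0 <= amax.
Proof. exact: bigmax_ge_id. Qed.

Lemma A_le_amax i j : A i j <= amax.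
Proof. by rewrite A_circ -modn_mod a_le_amax. Qed.

Lemma amax_attained : exists2 t, (t < n)%N & a t = amax.
Proof.
have a_ord_ge0 (t : 'I_n) : 0 <= a t by rewrite -(modn_small (ltn_ord t)) a_ge0.
rewrite /amax; have [t _ ->] := eq_bigmax (Ordinal n_gt0) xpredT (fun t : 'I_n => a t) isT
  (fun t _ => a_ord_ge0 t).
by exists t.
Qed.

Lemma amax_gt0 : A != 0 -> 0 < amax.
Proof.
move=> A_nz; rewrite lt_neqAle amax_ge0 andbT eq_sym; apply: contra A_nz => /eqP amax0.
apply/eqP/matrixP => i j; rewrite mxE; apply/le_anti.
by rewrite (A_ge0 i j) andbT -amax0 A_le_amax.
Qed.

Lemma steps_weight_ge0 s : 0 <= steps_weight s.
Proof. by apply: prodr_ge0 => u _; apply: a_ge0. Qed.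

Lemma steps_weight_le s : steps_weight s <= amax ^+ size s.
Proof.
elim: s => [|u s IH]; rewrite /steps_weight ?big_nil ?big_cons //= exprS.
by rewrite ler_pM ?a_ge0 ?steps_weight_ge0 ?a_le_amax.
Qed.

Lemma steps_weight_cat s1 s2 :
  steps_weight (s1 ++ s2) = steps_weight s1 * steps_weight s2.
Proof. by rewrite /steps_weight big_cat. Qed.

Lemma steps_weight_nseq m t : (t < n)%N -> a t = amax ->
  steps_weight (nseq m t) = amax ^+ m.
Proof.
move=> t_lt_n at_max; elim: m => [|m IH]; rewrite /steps_weight ?big_nil //= big_cons.
by rewrite -/(steps_weight _) IH modn_small // at_max exprS.
Qed.

Lemma val_iter_shift m s i : val (iter m (shift s) i) = ((i + m * s) %% n)%N.
Proof.
elim: m => [|m IH] /=; first by rewrite addn0 modn_small.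
by rewrite IH modnDml mulSn (addnC s) addnA.
Qed.

Lemma iter_shift_muln m s i : iter (m * n) (shift s) i = i.
Proof. by apply/val_inj; rewrite val_iter_shift mulnAC addnC modnMDl modn_small. Qed.

Lemma iter_shift_n s i : iter n (shift s) i = i.
Proof. by have := iter_shift_muln 1 s i; rewrite mul1n. Qed.

Lemma steps_weight_le_mpow k s (i j : 'I_n) :
  size s = k -> ((i + sumn s) %% n)%N = j -> steps_weight s <= mpow A k i j.
Proof.
elim: s k i => [|u s IH] [|k] i //=.
  rewrite addn0 modn_small // => _ /val_inj <-.
  by rewrite /mpow /= mxE eqxx /steps_weight big_nil.
move=> [size_s] end_s; rewrite mxE.
apply: le_trans (le_bigmax _ (fun m => A i m * mpow A k m j) (shift u i)).
rewrite /steps_weight big_cons -/(steps_weight s) A_shift.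
rewrite ler_pM ?a_ge0 ?steps_weight_ge0 //.
by apply: IH => //=; rewrite modnDml -addnA.
Qed.

Lemma mpow_le_steps_weight k (i j : 'I_n) : mpow A k i j <= 0 \/
  exists s, [/\ size s = k, ((i + sumn s) %% n)%N = j & mpow A k i j <= steps_weight s].
Proof.
elim: k i j => [|k IH] i j.
  rewrite /mpow /= mxE; case: (eqVneq i j) => [<-|_] /=; last by left.
  by right; exists [::]; rewrite addn0 modn_small // /steps_weight big_nil.
rewrite mpowS /mmul mxE.
have [m _ ->] := eq_bigmax i xpredT (fun m => A i m * mpow A k m j) isT
  (fun m _ => mulr_ge0 (A_ge0 i m) (mpow_ge0 A k m j)).
have [mpow_le0|[s [size_s end_s mpow_le]]] := IH m j.
  by left; rewrite mulr_ge0_le0 // A_ge0.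
right; exists (((m + n - i) %% n)%N :: s); split => //=; first by rewrite size_s.
  rewrite addnA -modnDml modnDmr subnKC; last first.
    exact: leq_trans (ltnW (ltn_ord i)) (leq_addl _ _).
  by rewrite modnDml addnAC modnDr.
by rewrite /steps_weight big_cons -/(steps_weight s) modn_mod -A_circ ler_wpM2l.
Qed.

Lemma shorten_steps s t : (n <= size s)%N -> (t < n)%N -> a t = amax ->
  exists s', [/\ size s' = (size s).-1, ((sumn s' + t) %% n = sumn s %% n)%N
                & steps_weight s <= amax * steps_weight s'].
Proof.
move=> n_le_s t_lt_n at_max.
(* f p is the endpoint of the walk taking the first p steps of s, then only steps t *)
pose f (p : 'I_(size s).+1) : 'I_n :=
  Ordinal (ltn_pmod (sumn (take p s) + (size s - p) * t) n_gt0).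
have [p [q [pq fpq]]] : exists p q : 'I_(size s).+1, (p < q)%N /\ f p = f q.
  by apply: pigeonhole_lt; rewrite card_ord ltnS.
have q_le_s : (q <= size s)%N by rewrite -ltnS.
set blk := take (q - p) (drop p s).
have take_q : take q s = take p s ++ blk by rewrite -takeD subnKC // ltnW.
have blk_sum : ((q - p) * t %% n = sumn blk %% n)%N.
  apply/eqP; rewrite -(eqn_modDl (sumn (take p s) + (size s - q) * t)); apply/eqP.
  move: (congr1 val fpq) => /=.
  have -> : (size s - p = (size s - q) + (q - p))%N by lia.
  by rewrite take_q sumn_cat mulnDl => fpq_val; rewrite -addnA fpq_val addnAC.
have qp : (q - p = (q - p).-1.+1)%N by rewrite prednK // subn_gt0.
exists (take p s ++ nseq (q - p).-1 t ++ drop q s); split.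
- rewrite !size_cat size_nseq size_drop size_takel; first by lia.
  exact: leq_trans (ltnW pq) q_le_s.
- rewrite !sumn_cat sumn_nseq.
  have -> : (sumn (take p s) + (t * (q - p).-1 + sumn (drop q s)) + t
            = sumn (take p s) + sumn (drop q s) + (q - p) * t)%N.
    by rewrite {2}qp; ring.
  have -> : sumn s = (sumn (take p s) + sumn blk + sumn (drop q s))%N.
    by rewrite -{1}(cat_take_drop q s) sumn_cat take_q sumn_cat.
  by rewrite -modnDmr blk_sum modnDmr addnAC.
- rewrite -{1}(cat_take_drop q s) take_q !steps_weight_cat steps_weight_nseq //.
  have blk_le : steps_weight blk <= amax ^+ (q - p).
    by have := steps_weight_le blk; rewrite size_takel // size_drop leq_sub2r.
  apply: (@le_trans _ _ (steps_weight (take p s) * amax ^+ (q - p) *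
                         steps_weight (drop q s))).
    by rewrite ler_wpM2r ?steps_weight_ge0 // ler_wpM2l ?steps_weight_ge0.
  by rewrite {1}qp exprS le_eqVlt; apply/orP; left; apply/eqP; ring.
Qed.

Lemma mpowS_shift k t (i j : 'I_n) : (n <= k.+1)%N -> (t < n)%N -> a t = amax ->
  mpow A k.+1 i j = amax * mpow A k (shift t i) j.
Proof.
move=> n_le_k t_lt_n at_max; apply/le_anti/andP; split; last first.
  rewrite mpowS /mmul mxE.
  have := le_bigmax 0 (fun m => A i m * mpow A k m j) (shift t i).
  by rewrite A_shift modn_small // at_max.
have [mpow_le0|[s [size_s end_s mpow_le]]] := mpow_le_steps_weight k.+1 i j.
  by apply: le_trans mpow_le0 _; rewrite mulr_ge0 ?amax_ge0 ?mpow_ge0.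
have [|s' [size_s' sum_s' weight_le]] := shorten_steps (s := s) _ t_lt_n at_max.
  by rewrite size_s.
apply: le_trans mpow_le (le_trans weight_le _).
rewrite ler_wpM2l ?amax_ge0 //; apply: steps_weight_le_mpow; first by rewrite size_s' size_s.
by rewrite /= modnDml -addnA (addnC t) -modnDmr sum_s' modnDmr.
Qed.

Lemma mrow_mpowS_shift k t i x : (n <= k.+1)%N -> (t < n)%N -> a t = amax ->
  mrow (mpow A k.+1) i x = amax * mrow (mpow A k) (shift t i) x.
Proof.
move=> n_le_k t_lt_n at_max; rewrite /mrow mulr_bigmax ?amax_ge0 //.
by apply: eq_bigr => c _; rewrite (mpowS_shift _ _ n_le_k t_lt_n at_max) mulrA.
Qed.

Lemma mrow_mpowD_shift m k t i x : (n <= k.+1)%N -> (t < n)%N -> a t = amax ->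
  mrow (mpow A (m + k)) i x = amax ^+ m * mrow (mpow A k) (iter m (shift t) i) x.
Proof.
move=> n_le_k t_lt_n at_max; elim: m i => [|m IH] i; first by rewrite mul1r.
rewrite addSn (mrow_mpowS_shift _ _ _ t_lt_n at_max); last first.
  by apply: leq_trans n_le_k _; rewrite ltnS leq_addl.
by rewrite IH mulrA -exprS iterSr.
Qed.

Section Critical.
Hypothesis amax_gt0 : 0 < amax.

Lemma walkw_ge0 i p : 0 <= walkw A i p.
Proof. by elim: p i => [|j p IH] i //=; rewrite mulr_ge0 ?A_ge0. Qed.

Lemma walkw_le i p : walkw A i p <= amax ^+ size p.
Proof.
elim: p i => [|j p IH] i //=; rewrite exprS.
by rewrite ler_pM ?A_ge0 ?walkw_ge0 ?A_le_amax.
Qed.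

Lemma walkw_max_edge p1 u v p2 : forall i p, i :: p = p1 ++ [:: u, v & p2] ->
  walkw A i p = amax ^+ size p -> A u v = amax.
Proof.
have split_max i j p : A i j * walkw A j p = amax * amax ^+ size p ->
    A i j = amax /\ walkw A j p = amax ^+ size p.
  apply: pmulr_eq_bounds; rewrite ?A_ge0 ?A_le_amax ?walkw_ge0 ?walkw_le //.
  exact: exprn_gt0.
elim: p1 => [|y p1 IH] i p /=.
  by case=> -> -> /=; rewrite exprS => /split_max[].
case=> _; case: p => [|z q] p_eq; first by case: p1 {IH} p_eq.
by rewrite /= exprS => /split_max[_]; apply: IH p_eq.
Qed.

Lemma crit_edge_amax u v : crit_edge A amax u v -> A u v = amax.
Proof. by move=> [i [p [[_ walkw_p] [p1 [p2 p_eq]]]]]; apply: walkw_max_edge p_eq walkw_p. Qed.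

Lemma crit_edge_is_shift u w : crit_edge A amax u w ->
  exists s, [/\ (s < n)%N, a s = amax & w = shift s u].
Proof.
move=> /crit_edge_amax; rewrite A_circ => max_uw.
exists ((w + n - u) %% n)%N; split; rewrite ?ltn_pmod //.
apply/val_inj => /=; rewrite modnDmr subnKC ?modnDr ?modn_small //.
exact: leq_trans (ltnW (ltn_ord u)) (leq_addl _ _).
Qed.

Lemma crit_walk_const (T : Type) (Q : 'I_n -> T) u v p :
  (forall s y, (s < n)%N -> a s = amax -> Q (shift s y) = Q y) ->
  crit_walk A amax u v p -> Q v = Q u.
Proof.
move=> Q_inv [+ <-]; elim: p u => [|w p IH] u //= [/crit_edge_is_shift].
by case=> s [s_lt as_max ->] walk_p; rewrite IH // Q_inv.
Qed.

Variable t : nat.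
Hypotheses (t_lt_n : (t < n)%N) (at_max : a t = amax).

Lemma walkw_shift m i : walkw A i (traject (shift t) (shift t i) m) = amax ^+ m.
Proof.
elim: m i => [|m IH] i //=.
by rewrite A_shift modn_small // at_max IH exprS.
Qed.

Lemma crit_cycle_shift i : crit_cycle A amax i (traject (shift t) (shift t i) n).
Proof.
split; last by rewrite walkw_shift size_traject.
split; last by rewrite last_traject iter_shift_n.
- apply: sub_path (fpath_traject (shift t) i n) => u v /eqP <-.
  by rewrite A_shift modn_small // at_max gt_eqF.
- by rewrite -size_eq0 size_traject -lt0n.
Qed.

Lemma is_lambda_amax l : is_lambda A l -> l = amax.
Proof.
move=> [l_ge0 cycle_le [i [p [[_ p_nil _] walkw_p]]]].
have p_gt0 : (0 < size p)%N by rewrite lt0n size_eq0.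
apply/le_anti/andP; split.
  by rewrite -(ler_pXn2r p_gt0) ?nnegrE ?amax_ge0 // -walkw_p walkw_le.
have := cycle_le _ _ (crit_cycle_shift (Ordinal n_gt0)).1.
by rewrite walkw_shift size_traject ler_pXn2r ?nnegrE ?amax_ge0.
Qed.

Lemma crit_edge_shift u : crit_edge A amax u (shift t u).
Proof.
exists u, (traject (shift t) (shift t u) n); split; first exact: crit_cycle_shift.
exists [::], (traject (shift t) (shift t (shift t u)) n.-1).
by rewrite -[X in traject _ (shift t u) X](prednK n_gt0).
Qed.

Lemma crit_node_shift u : crit_node A amax u.
Proof.
by exists u, (traject (shift t) (shift t u) n); split; [exact: crit_cycle_shift | exact: mem_head].
Qed.

Lemma crit_walk_shift m u :
  crit_walk A amax u (iter m (shift t) u) (traject (shift t) (shift t u) m).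
Proof.
split; last by rewrite last_traject.
by elim: m u => [|m IH] u //=; split; [exact: crit_edge_shift | exact: IH].
Qed.

Lemma to1_shift i : to1 A amax i (shift t i).
Proof.
have cycle_i := crit_walk_shift n i; rewrite iter_shift_n in cycle_i.
have back := crit_walk_shift n.-1 (shift t i).
rewrite -iterSr prednK // iter_shift_n in back.
set q := traject _ _ n.-1 in back.
have fwd : crit_walk A amax i (shift t i) [:: shift t i].
  by split => //=; split => //; exact: crit_edge_shift.
have sim_ii : simA A amax i i.
  by split; [exact: crit_node_shift | exact: crit_node_shift | exists [::] | exists [::]].
split.
  split; [exact: crit_node_shift | exact: crit_node_shift | by exists [:: shift t i] | ].
  by exists q.
(* completed by the shift walk i + t -> i of length n - 1, p becomes a cycle *)
move=> s [s_div _] p walk_p.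
have /eqP s_n : (s %| n)%N.
  have := s_div i _ sim_ii cycle_i; rewrite size_traject; apply.
  by rewrite -size_eq0 size_traject -lt0n.
have /eqP s_pq : (s %| size p + n.-1)%N.
  rewrite -(size_traject (shift t) (shift t (shift t i)) n.-1) -size_cat.
  have [->|pq_ne] := eqVneq (p ++ q) [::]; first by rewrite dvdn0.
  exact: s_div (crit_walk_cat walk_p back) pq_ne.
by apply/eqP; rewrite -(eqn_modDr n.-1) add1n prednK // s_pq s_n.
Qed.

End Critical.

Section Attraction.
Hypothesis amax_gt0 : 0 < amax.
Variable x : 'I_n -> R.
Hypothesis x_ge0 : forall c, 0 <= x c.

Lemma in_attr_shift_invariant s y : in_attr A amax x -> (s < n)%N -> a s = amax ->
  mrow (mpow A (n ^ 2)) (shift s y) x = mrow (mpow A (n ^ 2)) y x.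
Proof.
move=> [t0 eigen_t0] s_lt_n as_max.
have amax_neq0 : amax != 0 by rewrite gt_eqF.
have n_le_n2 : (n <= (n ^ 2).+1)%N by rewrite ltnW // ltnS expnS expn1 leq_pmulr.
have stable : forall i, mrow (mpow A (t0 + n ^ 2)) (shift s i) x =
                        mrow (mpow A (t0 + n ^ 2)) i x.
  move=> i; apply: (mulfI amax_neq0).
  rewrite -(mrow_mpowS_shift _ _ _ s_lt_n as_max); last first.
    by apply: leq_trans n_le_n2 _; rewrite ltnS leq_addl.
  by rewrite (mrow_eigen_from A_ge0 x_ge0 amax_ge0 eigen_t0) // leq_addr.
have shifted i : mrow (mpow A (n ^ 2)) (shift s (iter t0 (shift s) i)) x =
                 mrow (mpow A (n ^ 2)) (iter t0 (shift s) i) x.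
  apply: (mulfI (expf_neq0 t0 amax_neq0)).
  by rewrite -iterS iterSr -!(mrow_mpowD_shift _ _ _ n_le_n2 s_lt_n as_max) stable.
have := shifted (iter (t0 * n.-1) (shift s) y).
by rewrite -iterD -mulnS prednK // iter_shift_muln.
Qed.

Lemma shift_invariant_in_attr t : (t < n)%N -> a t = amax ->
  (forall y, mrow (mpow A (n ^ 2)) (shift t y) x = mrow (mpow A (n ^ 2)) y x) ->
  in_attr A amax x.
Proof.
move=> t_lt_n at_max invariant; exists (n ^ 2)%N => i.
rewrite (mrow_mpowS_shift _ _ _ t_lt_n at_max) ?invariant //.
by rewrite ltnW // ltnS expnS expn1 leq_pmulr.
Qed.

End Attraction.

End Circulant.

Theorem proposition5 (R : rcfType) (n : nat) (A : 'M[R]_n) (l : R) :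
  nonneg_mx A -> circulant A -> A != 0 -> is_lambda A l ->
  forall x : 'I_n -> R, (forall k, 0 <= x k) ->
  (in_attr A l x <->
     (forall i j, to1 A l i j ->
        mrow (mpow A (n ^ 2)%N) i x = mrow (mpow A (n ^ 2)%N) j x)) /\
  (in_attr A l x <->
     (forall i j, simA A l i j ->
        mrow (mpow A (n ^ 2)%N) i x = mrow (mpow A (n ^ 2)%N) j x)).
Proof.
move=> A_ge0 [a A_circ] A_nz l_lambda x x_ge0.
have n_gt0 := mx_neq0_gt0 A_nz.
have amax_pos := amax_gt0 A_circ A_ge0 n_gt0 A_nz.
have [t t_lt_n at_max] := amax_attained A_circ A_ge0 n_gt0.
rewrite (is_lambda_amax A_circ A_ge0 n_gt0 amax_pos t_lt_n at_max l_lambda).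
set Q := fun i => mrow (mpow A (n ^ 2)) i x.
have attr_const i j : in_attr A (amax n a) x -> simA A (amax n a) i j -> Q i = Q j.
  move=> attr [_ _ [p walk_ij] _]; symmetry.
  apply: (crit_walk_const A_circ A_ge0 amax_pos _ walk_ij) => s y.
  exact: (in_attr_shift_invariant A_circ A_ge0 n_gt0 amax_pos x_ge0).
have const_attr : (forall i, Q i = Q (shift n_gt0 t i)) -> in_attr A (amax n a) x.
  move=> Q_inv; apply: (shift_invariant_in_attr A_circ A_ge0 t_lt_n at_max) => y.
  exact: esym (Q_inv y).
have to1_t i := to1_shift A_circ n_gt0 amax_pos t_lt_n at_max i.
split; split.
- by move=> attr i j /proj1; apply: attr_const.
- by move=> Q_eq; apply: const_attr => i; apply/Q_eq/to1_t.
- by move=> attr i j; apply: attr_const.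
- by move=> Q_eq; apply: const_attr => i; apply/Q_eq/(to1_t i).1.
Qed.
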